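(* Let $M$ be a $4$-dimensional Riemannian manifold with metric $g$ and affinor structure $q$ (a $(1,1)$-tensor field) whose components in local coordinates $(x^1,x^2,x^3,x^4)$ are $$g_{ij}=\begin{pmatrix} A & B & C & B\\ B & A & B & C\\ C & B & A & B\\ B & C & B & A\end{pmatrix},\qquad q_i^{\ j}=\begin{pmatrix} 0&1&0&0\\0&0&1&0\\0&0&0&1\\1&0&0&0\end{pmatrix},$$ where $A,B,C$ are smooth functions with $0<B<C<A$. Then for every point $p\in M$ there exists an orthonormal $q$-base in $T_pM$, i.e. a vector $x\in T_pM$ such that $\{x,qx,q^2x,q^3x\}$ is a basis of $T_pM$ which is orthonormal with respect to $g$.
   Context: A $q$-base of $T_pM$ is a basis of $T_pM$ of the form $\{x,qx,q^2x,q^3x\}$ for some $x\in T_pM$. The structure satisfies $q^4=\mathrm{id}$ and $g(qx,qy)=g(x,y)$ for all vector fields $x,y$; the metric $g$ is positive definite under the stated inequalities. *)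

(* Pointwise (tangent-space) formalization: at a point p,
   T_pM = R^4 with coordinate basis d_1..d_4, vectors as row vectors. *)
From HB Require Import structures.
From mathcomp Require Import all_boot all_order all_algebra.
From mathcomp Require Import reals.
Set Implicit Arguments. Unset Strict Implicit. Unset Printing Implicit Defensive.
Import Order.TTheory GRing.Theory Num.Theory.
Local Open Scope ring_scope.

(* g_ij : circulant matrix with first row (A, B, C, B) *)
Definition gmat (R : nzRingType) (A B C : R) : 'M[R]_4 :=
  \matrix_(i < 4, j < 4)
    (let d := ((j + 4 - i) %% 4)%N in
     if d == 0%N then A else if d == 2%N then C else B).

Definition qmat (R : nzRingType) : 'M[R]_4 :=
  \matrix_(i < 4, j < 4) ((j == (i.+1 %% 4)%N :> nat)%:R : R).

Definition qact (R : nzRingType) (x : 'rV[R]_4) : 'rV[R]_4 := x *m qmat R.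

Definition gform (R : nzRingType) (G : 'M[R]_4) (x y : 'rV[R]_4) : R :=
  (x *m G *m y^T) 0 0.

Definition qfamily (R : nzRingType) (x : 'rV[R]_4) : 'M[R]_4 :=
  \matrix_(k < 4) iter k (@qact R) x.

Definition orthonormal_qbase (R : nzRingType) (G : 'M[R]_4) (x : 'rV[R]_4) : Prop :=
  (forall k l : 'I_4,
     gform G (row k (qfamily x)) (row l (qfamily x)) = (k == l)%:R).

Definition is_basis4 (R : fieldType) (x : 'rV[R]_4) : bool :=
  row_free (qfamily x).

(* The metric g is circulant, so it commutes with the cyclic shift q and is
   diagonalised by the discrete Fourier basis, with eigenvalues A + 2B + C,
   A - C (twice) and A - 2B + C, all positive when 0 < B < C < A.  Taking for x
   the sum of the real Fourier modes weighted by the inverse square roots of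
   these eigenvalues makes the Gram matrix of x, qx, q^2x, q^3x the identity,
   and a family with invertible Gram matrix is linearly independent. *)
From HB Require Import structures.
From mathcomp Require Import all_boot all_order all_algebra.
From mathcomp Require Import reals.
From mathcomp Require Import ring lra.
Set Implicit Arguments.
Import Order.TTheory GRing.Theory Num.Theory.
Local Open Scope ring_scope.

Definition r4 {R : nzRingType} (u0 u1 u2 u3 : R) : 'rV[R]_4 :=
  \row_(j < 4) [:: u0; u1; u2; u3]`_j.

Lemma qact_r4 (R : comNzRingType) (u0 u1 u2 u3 : R) :
  qact (r4 u0 u1 u2 u3) = r4 u3 u0 u1 u2.
Proof.
apply/rowP => j; rewrite /qact /qmat /r4 !mxE !big_ord_recr big_ord0 /= !mxE /=.
by case: j => [[|[|[|[|j]]]] Hj] //=; ring.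
Qed.

Lemma gform_r4 (R : comNzRingType) (A B C u0 u1 u2 u3 v0 v1 v2 v3 : R) :
  gform (gmat A B C) (r4 u0 u1 u2 u3) (r4 v0 v1 v2 v3) =
  u0 * (A * v0 + B * v1 + C * v2 + B * v3) + u1 * (B * v0 + A * v1 + B * v2 + C * v3)
  + u2 * (C * v0 + B * v1 + A * v2 + B * v3) + u3 * (B * v0 + C * v1 + B * v2 + A * v3).
Proof.
rewrite /gform /gmat /r4 !mxE !big_ord_recr big_ord0 /= !mxE.
by rewrite !big_ord_recr !big_ord0 /= !mxE /=; ring.
Qed.

Lemma gram_qfamily (R : nzRingType) (G : 'M[R]_4) (x : 'rV[R]_4) (k l : 'I_4) :
  (qfamily x *m G *m (qfamily x)^T) k l
  = gform G (row k (qfamily x)) (row l (qfamily x)).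
Proof.
rewrite /gform tr_row -row_mul !mxE; apply: eq_bigr => j _; by rewrite !mxE.
Qed.

Lemma orthonormal_qbase_is_basis4 (R : fieldType) (G : 'M[R]_4) (x : 'rV[R]_4) :
  orthonormal_qbase G x -> is_basis4 x.
Proof.
move=> Hx; rewrite /is_basis4 row_free_unit.
have gram1 : qfamily x *m (G *m (qfamily x)^T) = 1%:M.
  by apply/matrixP => k l; rewrite mulmxA gram_qfamily Hx mxE; case: eqP.
by case: (mulmx1_unit gram1).
Qed.

(* Real Fourier modes (1,1,1,1), (2,0,-2,0) and (1,-1,1,-1), weighted by a, b, c. *)
Definition qbase_vec {R : fieldType} (a b c : R) : 'rV[R]_4 :=
  r4 ((a + b *+ 2 + c) / 4) ((a - c) / 4) ((a - b *+ 2 + c) / 4) ((a - c) / 4).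

Lemma orthonormal_qbase_gmat (R : fieldType) (A B C a b c : R) :
  2 != 0 :> R -> a != 0 -> b != 0 -> c != 0 ->
  A + B *+ 2 + C = a ^- 2 -> A - C = b ^- 2 -> A - B *+ 2 + C = c ^- 2 ->
  orthonormal_qbase (gmat A B C) (qbase_vec a b c).
Proof.
move=> h2 ha hb hc ea eb ec.
have h4 : 4 != 0 :> R by rewrite (_ : 4 = 2 * 2) ?mulf_neq0 //; ring.
have -> : A = (a ^- 2 + b ^- 2 *+ 2 + c ^- 2) / 4.
  by rewrite -ea -eb -ec; field.
have -> : B = (a ^- 2 - c ^- 2) / 4 by rewrite -ea -ec; field.
have -> : C = (a ^- 2 - b ^- 2 *+ 2 + c ^- 2) / 4.
  by rewrite -ea -eb -ec; field.
move=> k l; rewrite /qbase_vec /qfamily !rowK.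
case: k => [[|[|[|[|k]]]] Hk] //; case: l => [[|[|[|[|l]]]] Hl] //=;
by rewrite ?qact_r4 gform_r4; field; rewrite ?h4 ?ha ?hb ?hc.
Qed.

Lemma exists_inv_sqr (R : rcfType) (r : R) :
  0 < r -> exists a : R, a != 0 /\ a ^- 2 = r.
Proof.
move=> r_gt0; exists (Num.sqrt r)^-1; split.
  by rewrite invr_eq0 sqrtr_eq0 -ltNge.
by rewrite exprVn invrK sqr_sqrtr // ltW.
Qed.

Theorem theorem2p2 (R : realType) (A B C : R) :
  0 < B -> B < C -> C < A ->
  exists x : 'rV[R]_4,
    is_basis4 x /\ orthonormal_qbase (gmat A B C) x.
Proof.
move=> hB hBC hCA.
have [a [a0 ea]] := @exists_inv_sqr _ (A + B *+ 2 + C) ltac:(lra).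
have [b [b0 eb]] := @exists_inv_sqr _ (A - C) ltac:(lra).
have [c [c0 ec]] := @exists_inv_sqr _ (A - B *+ 2 + C) ltac:(lra).
have h2 : 2 != 0 :> R by rewrite pnatr_eq0.
have Hx := @orthonormal_qbase_gmat R A B C a b c h2 a0 b0 c0 (esym ea) (esym eb) (esym ec).
by exists (qbase_vec a b c); split; first exact: orthonormal_qbase_is_basis4 Hx.
Qed.
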